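(* Let $(X,d)$ be a compact metric space and $f_{1,\infty}$ a commutative $m$-periodic sequence of continuous surjective self-maps of $X$. If $(X,f_{1,\infty})$ is weakly mixing, then it is totally transitive.
   Context: Commutative: $f_i\circ f_j=f_j\circ f_i$ for all $i,j$. $m$-periodic: $f_{n+m}=f_n$ for all $n$. Write $f_1^n=f_n\circ\cdots\circ f_1$ and $f_{1,\infty}^{[k]}=\{f_{k(n-1)+1}^k\}_{n\ge1}$ with $f_n^i=f_{n+i-1}\circ\cdots\circ f_n$. Weakly mixing: for all non-empty open $U_1,U_2,V_1,V_2$ there is $n$ with $f_1^n(U_i)\cap V_i\ne\emptyset$, $i=1,2$. Topologically transitive: for all non-empty open $U,V$ some $n$ with $f_1^n(U)\cap V\ne\emptyset$. Totally transitive: $(X,f_{1,\infty}^{[k]})$ is topologically transitive for every $k\ge1$. *)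

From Stdlib Require Import Reals List.
Open Scope R_scope.

Definition is_metric {X : Type} (d : X -> X -> R) : Prop :=
  (forall x y, 0 <= d x y) /\
  (forall x y, d x y = 0 <-> x = y) /\
  (forall x y, d x y = d y x) /\
  (forall x y z, d x z <= d x y + d y z).

Definition is_open {X : Type} (d : X -> X -> R) (U : X -> Prop) : Prop :=
  forall x, U x -> exists eps, 0 < eps /\ forall y, d x y < eps -> U y.

Definition nonempty {X : Type} (U : X -> Prop) : Prop := exists x, U x.

Definition compact_space {X : Type} (d : X -> X -> R) : Prop :=
  forall (I : Type) (U : I -> X -> Prop),
    (forall i, is_open d (U i)) -> (forall x, exists i, U i x) ->
    exists l : list I, forall x, exists i, In i l /\ U i x.

Definition continuous {X : Type} (d : X -> X -> R) (g : X -> X) : Prop :=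
  forall x eps, 0 < eps -> exists delta, 0 < delta /\
    forall y, d x y < delta -> d (g x) (g y) < eps.

Definition surjective {X : Type} (g : X -> X) : Prop := forall y, exists x, g x = y.

(* Sequences of maps are 0-indexed: [f i] stands for the paper's f_{i+1}. *)

(* fcomp f k n = f_{k+n-1} o ... o f_k  (0-indexed; fcomp f k 0 = id).
   With this indexing, the paper's f_{k+1}^n is fcomp f k n and f_1^n is fcomp f 0 n. *)
Fixpoint fcomp {X : Type} (f : nat -> X -> X) (k n : nat) (x : X) : X :=
  match n with
  | O => x
  | S n' => f (k + n')%nat (fcomp f k n' x)
  end.

Definition commutative_seq {X : Type} (f : nat -> X -> X) : Prop :=
  forall i j x, f i (f j x) = f j (f i x).

Definition periodic_seq {X : Type} (f : nat -> X -> X) (m : nat) : Prop :=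
  forall n x, f (n + m)%nat x = f n x.

Definition meets {X : Type} (f : nat -> X -> X) (n : nat) (U V : X -> Prop) : Prop :=
  exists x, U x /\ V (fcomp f 0 n x).

Definition weakly_mixing {X : Type} (d : X -> X -> R) (f : nat -> X -> X) : Prop :=
  forall U1 U2 V1 V2 : X -> Prop,
    is_open d U1 -> is_open d U2 -> is_open d V1 -> is_open d V2 ->
    nonempty U1 -> nonempty U2 -> nonempty V1 -> nonempty V2 ->
    exists n, (1 <= n)%nat /\ meets f n U1 V1 /\ meets f n U2 V2.

Definition top_transitive {X : Type} (d : X -> X -> R) (f : nat -> X -> X) : Prop :=
  forall U V : X -> Prop,
    is_open d U -> is_open d V -> nonempty U -> nonempty V ->
    exists n, (1 <= n)%nat /\ meets f n U V.

(* f_{1,oo}^{[k]}: its n-th map (paper index n >= 1) is f_{k(n-1)+1}^k;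
   0-indexed: block f k i = f_{k i + 1}^k = fcomp f (k*i) k. *)
Definition block {X : Type} (f : nat -> X -> X) (k : nat) : nat -> X -> X :=
  fun i => fcomp f (k * i) k.

Definition totally_transitive {X : Type} (d : X -> X -> R) (f : nat -> X -> X) : Prop :=
  forall k, (1 <= k)%nat -> top_transitive d (block f k).

(** Weak mixing gives, for any finitely many pairs of non-empty open sets
    (U_j, V_j), a single pair (A, B) of non-empty open sets such that every
    hitting time of (A, B) is a common hitting time of all the (U_j, V_j);
    refining one pair at a time only needs that f_1^n commutes with f_1^t.
    For the k-th block system take the pairs (U, (f_{s+1}^i)^{-1} V) with
    s < m and i < k.  A hitting time t of (A, B) rounds up to a multiple
    t + i = k q with i < k, and by periodicity f_{t+1}^i = f_{s+1}^i with
    s = t mod m, so f_1^{kq}(U) meets V. *)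
From Stdlib Require Import Reals List Lia Lra.
Open Scope R_scope.

Definition open_pair {X : Type} (d : X -> X -> R) (p : (X -> Prop) * (X -> Prop)) :=
  is_open d (fst p) /\ is_open d (snd p) /\ nonempty (fst p) /\ nonempty (snd p).

Lemma is_open_preimage {X : Type} (d : X -> X -> R) (g : X -> X) (W : X -> Prop) :
  continuous d g -> is_open d W -> is_open d (fun y => W (g y)).
Proof.
  intros Hg HW x Hx.
  destruct (HW _ Hx) as [e [He HWe]].
  destruct (Hg x e He) as [delta [Hdelta Hgdelta]].
  exists delta; split; auto.
Qed.

Lemma is_open_inter {X : Type} (d : X -> X -> R) (A B : X -> Prop) :
  is_open d A -> is_open d B -> is_open d (fun y => A y /\ B y).
Proof.
  intros HA HB x [Ax Bx].
  destruct (HA _ Ax) as [e1 [He1 HA1]], (HB _ Bx) as [e2 [He2 HB2]].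
  exists (Rmin e1 e2); split; [now apply Rmin_pos |].
  intros y Hy; split.
  - apply HA1; eapply Rlt_le_trans; [exact Hy | apply Rmin_l].
  - apply HB2; eapply Rlt_le_trans; [exact Hy | apply Rmin_r].
Qed.

Section Composition.

Variables (X : Type) (f : nat -> X -> X).

Lemma fcomp_add s a b x :
  fcomp f s (a + b) x = fcomp f (s + a) b (fcomp f s a x).
Proof.
  induction b as [|b IH]; simpl.
  - now rewrite Nat.add_0_r.
  - now rewrite Nat.add_succ_r; simpl; rewrite IH, Nat.add_assoc.
Qed.

Lemma fcomp_block k n x : fcomp (block f k) 0 n x = fcomp f 0 (k * n) x.
Proof.
  induction n as [|n IH]; simpl.
  - now rewrite Nat.mul_0_r.
  - rewrite IH; unfold block.
    replace (k * S n)%nat with (k * n + k)%nat by lia.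
    now rewrite fcomp_add.
Qed.

Lemma continuous_fcomp d :
  (forall i, continuous d (f i)) -> forall s n, continuous d (fcomp f s n).
Proof.
  intros Hf s n; induction n as [|n IH]; intros x eps Heps; simpl.
  - now exists eps.
  - destruct (Hf (s + n)%nat (fcomp f s n x) eps Heps) as [d1 [Hd1 H1]].
    destruct (IH x d1 Hd1) as [d2 [Hd2 H2]].
    exists d2; split; auto.
Qed.

Lemma surjective_fcomp :
  (forall i, surjective (f i)) -> forall s n, surjective (fcomp f s n).
Proof.
  intros Hf s n; induction n as [|n IH]; intros y; simpl.
  - now exists y.
  - destruct (Hf (s + n)%nat y) as [z <-], (IH z) as [w <-].
    now exists w.
Qed.

Lemma fcomp_commute : commutative_seq f ->
  forall s n s' n' x, fcomp f s n (fcomp f s' n' x) = fcomp f s' n' (fcomp f s n x).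
Proof.
  intros Hcomm.
  assert (Hstep : forall i s n x, f i (fcomp f s n x) = fcomp f s n (f i x)).
  { intros i s n; induction n as [|n IH]; intros x; simpl; auto.
    now rewrite Hcomm, IH. }
  intros s n s' n'; induction n' as [|n' IH]; intros x; simpl; auto.
  now rewrite <- IH, (Hstep _ s n).
Qed.

Lemma fcomp_mod m : (0 < m)%nat -> periodic_seq f m ->
  forall t i x, fcomp f t i x = fcomp f (t mod m) i x.
Proof.
  intros Hm Hper.
  assert (Hshift : forall q n x, f (n + q * m)%nat x = f n x).
  { induction q as [|q IH]; intros n x; simpl.
    - now rewrite Nat.add_0_r.
    - now replace (n + (m + q * m))%nat with (n + q * m + m)%nat by lia;
        rewrite Hper. }
  assert (Hfshift : forall q s i x, fcomp f (s + q * m) i x = fcomp f s i x).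
  { intros q s i; induction i as [|i IH]; intros x; simpl; auto.
    rewrite IH, <- (Hshift q (s + i)%nat).
    now replace (s + q * m + i)%nat with (s + i + q * m)%nat by lia. }
  intros t i x.
  replace t with (t mod m + t / m * m)%nat at 1
    by (pose proof (Nat.div_mod_eq t m); lia).
  apply Hfshift.
Qed.

Lemma open_pair_fcomp_preimage d U V s i :
  (forall j, continuous d (f j)) -> (forall j, surjective (f j)) ->
  open_pair d (U, V) -> open_pair d (U, fun y => V (fcomp f s i y)).
Proof.
  intros Hcont Hsurj (HU & HV & HnU & [v Hv]); simpl in *.
  split; [| split; [| split]]; auto.
  - apply (is_open_preimage d (fcomp f s i)); auto.
    now apply continuous_fcomp.
  - destruct (surjective_fcomp Hsurj s i v) as [w Hw].
    exists w; cbn; now rewrite Hw.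
Qed.

Lemma meets_block k q t i U V :
  (t + i = k * q)%nat ->
  meets f t U (fun y => V (fcomp f t i y)) -> meets (block f k) q U V.
Proof.
  intros Htiq [x [Ux Vx]]; exists x; split; auto.
  now rewrite fcomp_block, <- Htiq, fcomp_add.
Qed.

End Composition.

Lemma weakly_mixing_top_transitive {X : Type} (d : X -> X -> R) (f : nat -> X -> X) :
  weakly_mixing d f -> top_transitive d f.
Proof.
  intros Hwm U V HU HV HnU HnV.
  destruct (Hwm U U V V HU HU HV HV HnU HnU HnV HnV) as [n [Hn [HUV _]]].
  now exists n.
Qed.

Lemma weakly_mixing_common_hitting_times {X : Type} (d : X -> X -> R) (f : nat -> X -> X) :
  inhabited X -> (forall i, continuous d (f i)) -> commutative_seq f ->
  weakly_mixing d f ->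
  forall l, Forall (open_pair d) l ->
  exists A B, open_pair d (A, B) /\
    forall t, meets f t A B -> Forall (fun p => meets f t (fst p) (snd p)) l.
Proof.
  intros [x0] Hcont Hcomm Hwm l Hl; induction Hl as [|[U V] l HUV _ IH].
  - assert (Htrue : is_open d (fun _ : X => True)).
    { intros x _; exists 1; split; [lra | auto]. }
    exists (fun _ => True), (fun _ => True).
    split; [split; [| split; [| split]]; auto; now exists x0 | constructor].
  - destruct IH as [A [B [(HA & HB & HnA & HnB) Himp]]].
    destruct HUV as (HU & HV & HnU & HnV); simpl in *.
    destruct (Hwm A B U V HA HB HU HV HnA HnB HnU HnV)
      as [n [_ [[a [Aa Ua]] [b [Bb Vb]]]]].
    (* Refine (A, B) to the points sent into (U, V) by f_1^n; an orbit
       segment of length t between them is carried along by f_1^n. *)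
    exists (fun x => A x /\ U (fcomp f 0 n x)), (fun x => B x /\ V (fcomp f 0 n x)).
    assert (Hopen : forall W Z, is_open d W -> is_open d Z ->
              is_open d (fun x => W x /\ Z (fcomp f 0 n x))).
    { intros W Z HW HZ; apply is_open_inter; auto.
      apply (is_open_preimage d (fcomp f 0 n)); auto.
      now apply continuous_fcomp. }
    split.
    + split; [| split; [| split]]; simpl; auto; [now exists a | now exists b].
    + intros t [x [[Ax Ux] [Bx Vx]]]; constructor.
      * exists (fcomp f 0 n x); split; auto.
        now rewrite fcomp_commute.
      * apply Himp; now exists x.
Qed.

Lemma round_up_to_multiple k t : (1 <= k)%nat -> (1 <= t)%nat ->
  exists i q, (i < k)%nat /\ (t + i = k * q)%nat /\ (1 <= q)%nat.
Proof.
  intros Hk Ht.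
  pose proof (Nat.div_mod t k ltac:(lia)) as Hdiv.
  pose proof (Nat.mod_upper_bound t k ltac:(lia)) as Hmod.
  destruct (Nat.eq_dec (t mod k) 0) as [Hr | Hr].
  - exists 0%nat, (t / k)%nat; lia.
  - exists (k - t mod k)%nat, (t / k + 1)%nat; lia.
Qed.

Theorem mainTheorem13 (X : Type) (d : X -> X -> R) (f : nat -> X -> X) (m : nat) :
  is_metric d -> compact_space d ->
  (0 < m)%nat ->
  (forall i, continuous d (f i)) -> (forall i, surjective (f i)) ->
  commutative_seq f -> periodic_seq f m ->
  weakly_mixing d f -> totally_transitive d f.
Proof.
  intros _ _ Hm Hcont Hsurj Hcomm Hper Hwm k Hk U V HU HV HnU HnV.
  set (pairs := map (fun si => (U, fun y => V (fcomp f (fst si) (snd si) y)))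
                    (list_prod (seq 0 m) (seq 0 k))).
  assert (Hpairs : Forall (open_pair d) pairs).
  { apply Forall_forall; intros p Hp.
    apply in_map_iff in Hp as [si [<- _]].
    now apply open_pair_fcomp_preimage. }
  destruct HnU as [u Uu].
  destruct (weakly_mixing_common_hitting_times d f (inhabits u) Hcont Hcomm Hwm
              pairs Hpairs) as [A [B [(HA & HB & HnA & HnB) Hhit]]].
  destruct (weakly_mixing_top_transitive d f Hwm A B HA HB HnA HnB) as [t [Ht HtAB]].
  destruct (round_up_to_multiple k t Hk Ht) as [i [q (Hi & Htiq & Hq)]].
  exists q; split; auto.
  apply (meets_block X f k q t i U V Htiq).
  assert (Hin : In (U, fun y => V (fcomp f (t mod m) i y)) pairs).
  { apply in_map_iff; exists ((t mod m)%nat, i); split; auto.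
    apply in_prod; apply in_seq; split; try lia.
    pose proof (Nat.mod_upper_bound t m ltac:(lia)); lia. }
  destruct (proj1 (Forall_forall _ _) (Hhit t HtAB) _ Hin) as [x [Ux Vx]].
  exists x; split; auto.
  now rewrite (fcomp_mod X f m Hm Hper t i).
Qed.
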